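(* Let $\mathcal C=(\Lambda+\mathbf t)\cap\triangle_n^{q-1}$ be a linear multiset code with $d_1(\mathcal C)>h$, where $\Lambda\subseteq A_{q-1}$ is a lattice and $\mathbf t\in\mathbb Z^q$ satisfies $\sum_i t_i=n$ and $t_i\ge h$ for all $i\in[q]$. Then there exist an Abelian group $G$, a $B_h$ set $B=\{b_0,\dots,b_{q-1}\}\subseteq G$ and $b\in G$ such that $\mathcal C=\{\mathbf x\in\triangle_n^{q-1}:\sum_{i=0}^{q-1}x_ib_i=b\}$.
   Context: $[q]=\{0,\dots,q-1\}$; $\triangle_n^{q-1}=\{\mathbf x\in\mathbb Z^q:x_i\ge0,\sum_ix_i=n\}$; $A_{q-1}=\{\mathbf x\in\mathbb Z^q:\sum_ix_i=0\}$; a lattice is a subgroup of $(\mathbb Z^q,+)$. A multiset code is a subset of $\triangle_n^{q-1}$ with at least two elements; it is linear if it equals $(\Lambda+\mathbf t)\cap\triangle_n^{q-1}$ for some lattice $\Lambda\subseteq A_{q-1}$ and $\mathbf t\in\mathbb Z^q$ with $\sum_it_i=n$. $d_1(\mathbf x,\mathbf y)=\frac12\sum_i|x_i-y_i|$, $d_1(\mathcal C)$ the minimum distance. A set $\{b_0,\dots,b_{q-1}\}$ in an Abelian group is a $B_h$ set if the sums $b_{i_1}+\dots+b_{i_h}$, $0\le i_1\le\dots\le i_h\le q-1$, are pairwise different; $x_ib_i$ denotes the $x_i$-fold sum in $G$ (with $-b_i$ for negative $x_i$). *)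

From HB Require Import structures.
From mathcomp Require Import all_boot all_order all_algebra.
Set Implicit Arguments. Unset Strict Implicit. Unset Printing Implicit Defensive.
Import Order.TTheory GRing.Theory Num.Theory.
Local Open Scope ring_scope.

Notation zvec q := {ffun 'I_q -> int}.

Definition in_simplex (q n : nat) (x : zvec q) : Prop :=
  (forall i, 0 <= x i) /\ \sum_(i < q) x i = n%:Z.

Definition in_A (q : nat) (x : zvec q) : Prop := \sum_(i < q) x i = 0.

Definition is_lattice (q : nat) (L : zvec q -> Prop) : Prop :=
  L 0 /\ (forall x y, L x -> L y -> L (x - y)).

Definition lin_code (q n : nat) (L : zvec q -> Prop) (t : zvec q) (x : zvec q) : Prop :=
  in_simplex n x /\ L (x - t).

Definition d1 (q : nat) (x y : zvec q) : rat :=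
  (\sum_(i < q) `|x i - y i|)%:~R / 2.

Definition min_dist_gt (q : nat) (C : zvec q -> Prop) (h : nat) : Prop :=
  forall x y, C x -> C y -> x <> y -> h%:R < d1 x y.

Definition Bh_set (G : zmodType) (q h : nat) (b : 'I_q -> G) : Prop :=
  forall s t : h.-tuple 'I_q,
    sorted (fun i j : 'I_q => (i <= j)%N) s ->
    sorted (fun i j : 'I_q => (i <= j)%N) t ->
    \sum_(j < h) b (tnth s j) = \sum_(j < h) b (tnth t j) -> s = t.

From HB Require Import structures.
From mathcomp Require Import all_boot all_order all_algebra.
From mathcomp Require Import boolp.
Import Order.TTheory GRing.Theory Num.Theory.
Local Open Scope ring_scope.
Local Open Scope quotient_scope.
Set Implicit Arguments. Unset Strict Implicit. Unset Printing Implicit Defensive.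

(* Take G = Z^q / Lambda, b_i the class of the i-th unit vector and b the class
   of t: then sum_i x_i b_i = b says exactly x - t \in Lambda.  The sums of h
   of the b_i are the classes of the count vectors c(s) of h-multisets s.  If
   c(s) - c(u) \in Lambda, then t - c(s) + c(u) is again a codeword (it is
   nonnegative because t_i >= h) at d_1-distance at most h from t, so it is t
   and c(s) = c(u). *)

Lemma addrBDKl (V : zmodType) (x a b : V) : x - a + b - x = b - a.
Proof. by rewrite addrAC (addrAC x) subrr add0r addrC. Qed.

Section UnitVectors.
Variable q : nat.
Implicit Types (x : zvec q) (r : seq 'I_q).

Definition unit_vec (k : 'I_q) : zvec q := [ffun i => (k == i)%:R].

Definition count_vec r : zvec q := [ffun i => (count_mem i r)%:Z].

Lemma zvec_unit_decomp x : x = \sum_i unit_vec i *~ x i.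
Proof.
apply/ffunP => j; rewrite sum_ffunE (bigD1 j) //= big1 => [|i ij].
  by rewrite ffunMzE ffunE eqxx mulrzz mul1r addr0.
by rewrite ffunMzE ffunE (negbTE ij) mul0rz.
Qed.

Lemma count_vec_cons k r : count_vec (k :: r) = unit_vec k + count_vec r.
Proof. by apply/ffunP => i; rewrite !ffunE /= PoszD; case: eqP. Qed.

Lemma sum_unit_vec r : \sum_(k <- r) unit_vec k = count_vec r.
Proof.
elim: r => [|k r IHr]; last by rewrite big_cons IHr count_vec_cons.
by rewrite big_nil; apply/ffunP => i; rewrite !ffunE.
Qed.

Lemma sum_count_vec r : \sum_i count_vec r i = (size r)%:Z.
Proof.
elim: r => [|k r IHr]; first by rewrite big1 // => i _; rewrite ffunE.
under eq_bigr do rewrite count_vec_cons ffunE.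
rewrite big_split /= IHr (bigD1 k) //= big1 => [|i ki]; last first.
  by rewrite ffunE eq_sym (negbTE ki).
by rewrite ffunE eqxx addr0 -add1n PoszD.
Qed.

Lemma sorted_count_vec_inj (s u : seq 'I_q) :
  sorted (fun i j : 'I_q => (i <= j)%N) s -> sorted (fun i j : 'I_q => (i <= j)%N) u ->
  count_vec s = count_vec u -> s = u.
Proof.
move=> ss su /ffunP csu; apply: (sorted_eq _ _ ss su).
- by move=> ???; apply: leq_trans.
- by move=> i j /andP[ij ji]; apply/val_inj/eqP; rewrite eqn_leq ij ji.
by apply/allP => i _ /=; have := csu i; rewrite !ffunE => -[->].
Qed.

Lemma d1_count_shift_le x (s u : seq 'I_q) :
  d1 x (x - count_vec s + count_vec u) <= (size s + size u)%:R / 2.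
Proof.
rewrite /d1 ler_pM2r ?invr_gt0 // -[(_ + _)%:R]/((_ + _)%:Z%:~R) ler_int PoszD.
rewrite -!sum_count_vec -big_split /=; apply: ler_sum => i _.
rewrite !ffunE -opprB addrBDKl normrN distrC.
by rewrite (le_trans (ler_normB _ _)) // !ger0_norm.
Qed.

Lemma raddf_unit_decomp (G : zmodType) (f : {additive zvec q -> G}) x :
  \sum_i f (unit_vec i) *~ x i = f x.
Proof.
by rewrite [in RHS](zvec_unit_decomp x) raddf_sum; apply: eq_bigr => i _; rewrite raddfMz.
Qed.

Lemma Bh_set_of_count_vec_inj (G : zmodType) (f : {additive zvec q -> G}) h :
  (forall s u : seq 'I_q, size s = h -> size u = h ->
     f (count_vec s) = f (count_vec u) -> count_vec s = count_vec u) ->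
  Bh_set h (fun i => f (unit_vec i)).
Proof.
move=> f_inj s u ss su; rewrite -!(big_tuple _ _ _ xpredT (fun k => f (unit_vec k))).
rewrite -!raddf_sum !sum_unit_vec => /(f_inj _ _ (size_tuple s) (size_tuple u)) csu.
exact/val_inj/sorted_count_vec_inj.
Qed.

End UnitVectors.

Definition lattice_mem q (L : zvec q -> Prop) : {pred zvec q} := fun x => `[< L x >].
Lemma lattice_mem_closed q (L : zvec q -> Prop) :
  is_lattice L -> zmod_closed (lattice_mem L).
Proof.
by case=> L0 LB; split=> [|x y /asboolP Lx /asboolP Ly]; apply/asboolP; [|apply: LB].
Qed.

Section LinearCode.
Variables (q n h : nat) (L : zvec q -> Prop) (t : zvec q).
Hypotheses (latL : is_lattice L) (sum_t : \sum_i t i = n%:Z) (t_ge_h : forall i, h%:Z <= t i).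
Hypothesis dist_gt_h : min_dist_gt (lin_code n L t) h.

Lemma lattice_opp x : L x -> L (- x).
Proof. by case: latL => L0 LB Lx; rewrite -sub0r; apply: LB. Qed.

Lemma lin_code_center : lin_code n L t t.
Proof.
split; last by rewrite subrr; case: latL.
by split=> // i; apply: le_trans (t_ge_h i).
Qed.

Lemma lin_code_count_shift (s u : seq 'I_q) : size s = h -> size u = h ->
  L (count_vec s - count_vec u) -> lin_code n L t (t - count_vec s + count_vec u).
Proof.
move=> hs hu Lsu; split; last first.
  by rewrite addrBDKl -opprB; apply: lattice_opp.
split=> [i|].
  rewrite !ffunE addr_ge0 // subr_ge0 (le_trans _ (t_ge_h i)) // -hs.
  by rewrite lez_nat count_size.
rewrite (eq_bigr (fun i => t i - count_vec s i + count_vec u i)) => [|i _].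
  by rewrite big_split sumrB /= sum_t !sum_count_vec hs hu addrNK.
by rewrite !ffunE.
Qed.

Lemma lin_code_count_vec_eq (s u : seq 'I_q) : size s = h -> size u = h ->
  L (count_vec s - count_vec u) -> count_vec s = count_vec u.
Proof.
move=> hs hu Lsu; set x := t - count_vec s + count_vec u.
have [x_t | x_neq_t] := eqVneq x t.
  by apply/esym/eqP; rewrite -subr_eq0 -(addrBDKl t) -/x x_t subrr.
have := dist_gt_h lin_code_center (lin_code_count_shift hs hu Lsu) (nesym (elimN eqP x_neq_t)).
have := d1_count_shift_le t s u.
rewrite hs hu natrD -mulr2n -[_ *+ 2]mulr_natr mulfK // => le_h.
by rewrite ltNge le_h.
Qed.

End LinearCode.

Theorem mainTheorem14 (q n h : nat) (L : zvec q -> Prop) (t : zvec q) :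
  is_lattice L -> (forall x, L x -> in_A x) ->
  \sum_(i < q) t i = n%:Z -> (forall i, h%:Z <= t i) ->
  (exists x y, lin_code n L t x /\ lin_code n L t y /\ x <> y) ->
  min_dist_gt (lin_code n L t) h ->
  exists (G : zmodType) (b : 'I_q -> G) (b0 : G),
    Bh_set h b /\
    forall x : zvec q,
      lin_code n L t x <-> (in_simplex n x /\ \sum_(i < q) (b i *~ x i) = b0).
Proof.
move=> latL _ sum_t t_ge_h _ dist_gt_h.
pose Lambda : zmodClosed (zvec q) :=
  HB.pack (lattice_mem L) (GRing.isZmodClosed.Build _ _ (lattice_mem_closed latL)).
pose G := Quotient.quot Lambda.
have eq_piP x y : \pi_G x = \pi_G y <-> L (x - y).
  by rewrite (rwP eqP) -Quotient.idealrBE; split=> /asboolP.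
exists G, (fun i => \pi_G (unit_vec i)), (\pi_G t); split.
  apply: Bh_set_of_count_vec_inj => s u hs hu /eq_piP.
  exact: (lin_code_count_vec_eq latL sum_t t_ge_h dist_gt_h hs hu).
by move=> x; rewrite raddf_unit_decomp eq_piP.
Qed.
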